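(* Let $(M,g)$ be a $d$-dimensional Lorentzian manifold with $d\ge 4$, $p\in M$, and $\{\ell,n,m^3,\dots,m^d\}$ a null frame at $p$. Suppose the Weyl tensor $C$ at $p$ is invariant under the subgroup of the Lorentz group that fixes $\ell$ and $n$ and acts as $SO(d-2)$, in its standard representation, on $\mathrm{span}\{m^3,\dots,m^d\}$. Consider the Weyl operator $\mathsf C$ on bivectors at $p$, $(\mathsf C F)^{\mu\nu}=\tfrac12 C^{\mu\nu}{}_{\alpha\beta}F^{\alpha\beta}$. Then the eigenvalues of $\mathsf C$ (with multiplicities) are: (i) if $d=4$: $-\tfrac14(\bar R+2iA_{34})$ and $-\tfrac14(\bar R-2iA_{34})$, each with multiplicity $2$, and $\tfrac12(\bar R+2iA_{34})$, $\tfrac12(\bar R-2iA_{34})$, each with multiplicity $1$; (ii) if $d>4$: $-\frac{1}{2(d-2)}\bar R$ with multiplicity $2(d-2)$, $\tfrac12\bar R$ with multiplicity $1$, and $\frac{1}{(d-2)(d-3)}\bar R$ with multiplicity $\tfrac{(d-2)(d-3)}{2}$.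
   Context: Null frame convention: $g=2\,\ell\, n+\delta_{ij}m^im^j$, i.e. $g(\ell,n)=1$, $g(m^i,m^j)=\delta_{ij}$, all other products zero. Frame indices: $0$ refers to $\ell$, $1$ to $n$, $i,j,k\in\{3,\dots,d\}$ to the $m^i$. $C_{abcd}$ are the frame components of the Weyl tensor. Define $\bar R_{ij}=\sum_k C_{kikj}$, $\bar R=\sum_i\bar R_{ii}$, and $A_{34}=C_{0134}$ (the frame component with indices $\ell,n,m^3,m^4$). *)

From HB Require Import structures.
From mathcomp Require Import all_boot all_order all_algebra.
From mathcomp Require Import complex.
Set Implicit Arguments. Unset Strict Implicit. Unset Printing Implicit Defensive.
Import Order.TTheory GRing.Theory Num.Theory.
Local Open Scope ring_scope.

(* Null frame {l, n, m^3, ..., m^d} at p, indexed by 'I_d: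
   index 0 = l, index 1 = n, index k >= 2 = m^(k+1).
   All tensors are given by their frame components. *)

Section WeylDefs.
Variables (R : rcfType) (d : nat).

(* Frame components of the metric g = 2 l n + sum_i m^i m^i;
   g(l,n) = 1, g(m^i,m^j) = delta_ij, others 0.  The inverse metric
   g^{ab} has the same components. *)
Definition fg (a b : 'I_d) : R :=
  (if (a < 2)%N && (b < 2)%N then a != b else a == b)%:R.

Definition fgmx : 'M[R]_d := \matrix_(a, b) fg a b.

(* frame components C_{abce} (all indices down) of an algebraic Weyl tensor *)
Definition is_weyl (C : 'I_d -> 'I_d -> 'I_d -> 'I_d -> R) : Prop :=
  [/\ forall a b c e, C a b c e = - C b a c e,
      forall a b c e, C a b c e = - C a b e c,
      forall a b c e, C a b c e = C c e a b,
      forall a b c e, C a b c e + C a c e b + C a e b c = 0 &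
      forall a c, \sum_b \sum_e fg b e * C a b c e = 0].

(* Lorentz transformations (frame matrix L: Lambda e_b = sum_a L a b e_a)
   fixing l and n and acting on span{m^i} with determinant 1, i.e. as SO(d-2). *)
Definition spin_rot (L : 'M[R]_d) : Prop :=
  [/\ forall a b : 'I_d, (b < 2)%N -> L a b = (a == b)%:R,
      L^T *m fgmx *m L = fgmx &
      \det L = 1].

Definition spin_invariant (C : 'I_d -> 'I_d -> 'I_d -> 'I_d -> R) : Prop :=
  forall L, spin_rot L -> forall a b c e,
    \sum_f \sum_g \sum_h \sum_k L f a * L g b * L h c * L k e * C f g h k
    = C a b c e.

Definition Rbar_ij (C : 'I_d -> 'I_d -> 'I_d -> 'I_d -> R) (i j : 'I_d) : R :=
  \sum_(k : 'I_d | (2 <= k)%N) C k i k j.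
Definition Rbar (C : 'I_d -> 'I_d -> 'I_d -> 'I_d -> R) : R :=
  \sum_(i : 'I_d | (2 <= i)%N) Rbar_ij C i i.

Definition Craise (C : 'I_d -> 'I_d -> 'I_d -> 'I_d -> R) (a b c e : 'I_d) : R :=
  \sum_f \sum_h fg a f * fg b h * C f h c e.

(* basis of bivectors: e_a /\ e_b with a < b; a bivector F has
   coordinates F^{ab} (a < b), with F^{ba} = - F^{ab}, F^{aa} = 0 *)
Definition biv := {p : 'I_d * 'I_d | (p.1 < p.2)%N}.

(* (C F)^{ab} = 1/2 C^{ab}_{ce} F^{ce}
             = sum_{c<e} 1/2 (C^{ab}_{ce} - C^{ab}_{ec}) F^{ce} *)
Definition weyl_entry (C : 'I_d -> 'I_d -> 'I_d -> 'I_d -> R) (p q : biv) : R :=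
  (Craise C (val p).1 (val p).2 (val q).1 (val q).2
   - Craise C (val p).1 (val p).2 (val q).2 (val q).1) / 2.

Definition weyl_op (C : 'I_d -> 'I_d -> 'I_d -> 'I_d -> R) : 'M[R]_#|{: biv}| :=
  \matrix_(i, j) weyl_entry C (enum_val i) (enum_val j).

End WeylDefs.

From HB Require Import structures.
From mathcomp Require Import all_boot all_order all_algebra all_fingroup.
From mathcomp Require Import complex.
From mathcomp Require Import ring lra zify.
Set Implicit Arguments. Unset Strict Implicit. Unset Printing Implicit Defensive.
Import Order.TTheory GRing.Theory Num.Theory.
Local Open Scope ring_scope.

(* Signed permutations of the spatial frame vectors m^i that fix l and n belong
   to the invariance group. A half turn in the (m^k, m^m) plane kills every
   component in which m^k and m^m occur an odd number of times in total, and a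
   quarter turn identifies components that differ by relabelling spatial
   indices. Together with the Bianchi identity (which kills the invariant
   epsilon-tensors of SO(3) and SO(4)) this makes the Weyl operator diagonal on
   the bivector basis when d > 4; the trace condition expresses its three
   distinct diagonal values through Rbar. For d = 4 the operator instead splits
   into three 2x2 blocks of the form [[a, -b], [b, a]], whose eigenvalues
   a +- i b involve A_34. *)

Section NullFrame.
Variable n : nat.
Local Notation d := n.+2.

Definition idx_l : 'I_d := ord0.
Definition idx_n : 'I_d := Ordinal (isT : 1 < d)%N.
Definition idx_m (i : 'I_n) : 'I_d := Ordinal (ltn_ord i : i.+2 < d)%N.

Variant frame_spec : 'I_d -> Type :=
  | FrameL : frame_spec idx_l
  | FrameN : frame_spec idx_n
  | FrameM i : frame_spec (idx_m i).

Lemma frameP a : frame_spec a.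
Proof.
case: a => [[|[|a]] lt_a].
- by rewrite (_ : Ordinal lt_a = idx_l); [constructor | apply: val_inj].
- by rewrite (_ : Ordinal lt_a = idx_n); [constructor | apply: val_inj].
- by rewrite (_ : Ordinal lt_a = idx_m (Ordinal (lt_a : a < n)%N)); [constructor | apply: val_inj].
Qed.

Variant biv_spec : 'I_d -> 'I_d -> Type :=
  | BivLN : biv_spec idx_l idx_n
  | BivLM i : biv_spec idx_l (idx_m i)
  | BivNM i : biv_spec idx_n (idx_m i)
  | BivMM (i j : 'I_n) of (i < j)%N : biv_spec (idx_m i) (idx_m j).

Lemma bivP (a b : 'I_d) : (a < b)%N -> biv_spec a b.
Proof. by case: (frameP a); case: (frameP b) => // *; constructor. Qed.

Lemma idx_m_inj : injective idx_m.
Proof. by move=> i j [] /val_inj. Qed.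

Lemma eq_idx_m i j : (idx_m i == idx_m j) = (i == j).
Proof. exact: (inj_eq idx_m_inj). Qed.

Definition swap_ln (a : 'I_d) : 'I_d :=
  if a == idx_l then idx_n else if a == idx_n then idx_l else a.

Lemma swap_ln_l : swap_ln idx_l = idx_n. Proof. by []. Qed.
Lemma swap_ln_n : swap_ln idx_n = idx_l. Proof. by []. Qed.
Lemma swap_ln_m i : swap_ln (idx_m i) = idx_m i. Proof. by []. Qed.

Section FrameBig.
Variables (T : Type) (idx : T) (op : Monoid.com_law idx).

Lemma big_frame (F : 'I_d -> T) :
  \big[op/idx]_a F a = op (op (F idx_l) (F idx_n)) (\big[op/idx]_i F (idx_m i)).
Proof.
rewrite !big_ord_recl Monoid.mulmA; congr (op (op _ (F _)) _); first exact: val_inj.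
by apply: eq_bigr => i _; congr F; apply: val_inj.
Qed.

Lemma big_spatial (F : 'I_d -> T) :
  \big[op/idx]_(a : 'I_d | (2 <= a)%N) F a = \big[op/idx]_i F (idx_m i).
Proof. by rewrite big_mkcond big_frame /= !Monoid.mul1m. Qed.

Lemma big_biv (F : 'I_d -> 'I_d -> T) :
  \big[op/idx]_(p : biv d) F (val p).1 (val p).2 =
  op (op (F idx_l idx_n) (\big[op/idx]_i op (F idx_l (idx_m i)) (F idx_n (idx_m i))))
     (\big[op/idx]_(i : 'I_n) \big[op/idx]_(j : 'I_n | (i < j)%N) F (idx_m i) (idx_m j)).
Proof.
have -> : \big[op/idx]_(p : biv d) F (val p).1 (val p).2 =
          \big[op/idx]_(a : 'I_d) \big[op/idx]_(b : 'I_d | (a < b)%N) F a b.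
  rewrite pair_big_dep (reindex_omap (val : biv d -> 'I_d * 'I_d) insub) /=.
    by apply: eq_big => [p|p _]; rewrite ?(valP p) ?valK ?eqxx.
  by move=> p lt_p; rewrite insubT.
rewrite big_frame.
have -> : \big[op/idx]_(b : 'I_d | (idx_l < b)%N) F idx_l b =
          op (F idx_l idx_n) (\big[op/idx]_i F idx_l (idx_m i)).
  by rewrite big_mkcond big_frame /= Monoid.mul1m.
rewrite big_spatial big_split -!Monoid.mulmA; do 3 congr (op _ _).
by apply: eq_bigr => i _; rewrite big_mkcond big_frame /= !Monoid.mul1m -big_mkcond.
Qed.

End FrameBig.

Variable R : rcfType.

Lemma fg_swap (a b : 'I_d) : fg R a b = (b == swap_ln a)%:R.
Proof. by case: (frameP a); case: (frameP b) => // i j; rewrite /fg /= eq_sym. Qed.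

Lemma sum_fg_mul (a : 'I_d) (F : 'I_d -> R) : \sum_b fg R a b * F b = F (swap_ln a).
Proof.
rewrite (big_only1 (swap_ln a)) // ?fg_swap ?eqxx ?mul1r // => b /negbTE nb _.
by rewrite fg_swap nb mul0r.
Qed.

Lemma Craise_swap (C : 'I_d -> 'I_d -> 'I_d -> 'I_d -> R) a b c e :
  Craise C a b c e = C (swap_ln a) (swap_ln b) c e.
Proof.
rewrite /Craise; under eq_bigr => f _ do under eq_bigr => h _ do rewrite -mulrA.
by under eq_bigr => f _ do rewrite -mulr_sumr sum_fg_mul; rewrite sum_fg_mul.
Qed.

Definition signed_perm_mx (s : 'S_d) (eps : 'I_d -> R) : 'M[R]_d :=
  \matrix_(f, a) if f == s a then eps a else 0.

Section SignedPerm.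
Variables (s : 'S_d) (eps : 'I_d -> R).
Hypotheses (s_l : s idx_l = idx_l) (s_n : s idx_n = idx_n).
Hypotheses (eps_l : eps idx_l = 1) (eps_n : eps idx_n = 1).
Hypothesis eps_sqr : forall a, eps a * eps a = 1.
Hypothesis sign_eps : (-1) ^+ s * \prod_a eps a = 1.

Lemma swap_ln_perm a : s (swap_ln a) = swap_ln (s a).
Proof.
case: (frameP a) => [||i]; rewrite /swap_ln ?s_l ?s_n //=.
have /negbTE-> : s (idx_m i) != idx_l by rewrite -s_l (inj_eq perm_inj).
by have /negbTE-> : s (idx_m i) != idx_n by rewrite -s_n (inj_eq perm_inj).
Qed.

Lemma fg_perm a b : fg R (s a) (s b) = fg R a b.
Proof. by rewrite !fg_swap -swap_ln_perm (inj_eq perm_inj). Qed.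

Lemma signed_perm_spin_rot : spin_rot (signed_perm_mx s eps).
Proof.
split.
- move=> a b; case: (frameP b) => [||//] _; rewrite mxE ?s_l ?s_n ?eps_l ?eps_n;
  by case: eqP.
- apply/matrixP=> a b; rewrite !mxE (big_only1 (s b)) => [|//|c /negbTE nc _]; last first.
    by rewrite !mxE nc mulr0.
  rewrite !mxE eqxx (big_only1 (s a)) => [|//|c /negbTE nc _]; last first.
    by rewrite !mxE nc mul0r.
  rewrite !mxE eqxx fg_perm fg_swap; case: (frameP a) => [||i] /=.
  + by case: eqP => [->|]; rewrite ?eps_l ?eps_n ?mulr1 ?mul1r ?mulr0 ?mul0r.
  + by case: eqP => [->|]; rewrite ?eps_l ?eps_n ?mulr1 ?mul1r ?mulr0 ?mul0r.
  + by case: eqP => [->|]; rewrite ?mulr0 ?mul0r // mulrC mulrA eps_sqr mul1r.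
- have -> : signed_perm_mx s eps = (perm_mx s)^T *m diag_mx (\row_a eps a).
    apply/matrixP=> f a; rewrite mul_mx_diag !mxE eq_sym.
    by case: eqP; rewrite ?mul1r ?mul0r.
  rewrite det_mulmx det_tr det_perm det_diag -[RHS]sign_eps.
  by congr (_ * _); apply: eq_bigr => a _; rewrite mxE.
Qed.

End SignedPerm.

Lemma spin_invariant_signed_perm (C : 'I_d -> 'I_d -> 'I_d -> 'I_d -> R) s eps :
  spin_invariant C -> spin_rot (signed_perm_mx s eps) ->
  forall a b c e,
  C a b c e = eps a * eps b * eps c * eps e * C (s a) (s b) (s c) (s e).
Proof.
move=> invC rotL a b c e; rewrite -(invC _ rotL).
have Lz x y : y != s x -> signed_perm_mx s eps y x = 0.
  by move=> /negbTE nyx; rewrite mxE nyx.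
rewrite (big_only1 (s a)) => [|//|f /Lz Lf _]; last first.
  by rewrite big1 // => g _; rewrite big1 // => h _; rewrite big1 // => k _; rewrite Lf !mul0r.
rewrite (big_only1 (s b)) => [|//|g /Lz Lg _]; last first.
  by rewrite big1 // => h _; rewrite big1 // => k _; rewrite Lg mulr0 !mul0r.
rewrite (big_only1 (s c)) => [|//|h /Lz Lh _]; last first.
  by rewrite big1 // => k _; rewrite Lh mulr0 !mul0r.
rewrite (big_only1 (s e)) => [|//|k /Lz Lk _]; last by rewrite Lk mulr0 mul0r.
by rewrite !mxE !eqxx.
Qed.

End NullFrame.
Arguments idx_l {n}.
Arguments idx_n {n}.

Lemma ord_neq_gt1 n (i j : 'I_n) : i != j -> (1 < n)%N.
Proof. by move: (ltn_ord i) (ltn_ord j); rewrite -val_eqE /=; lia. Qed.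

Lemma eq_ordE m (x y : 'I_m) : (x == y) = (val x == val y).
Proof. by []. Qed.

Ltac count_lia :=
  repeat match goal with H : is_true _ |- _ => revert H end;
  rewrite /= ?eq_ordE /=; lia.

Section WeylSymmetries.
Variables (n : nat) (R : rcfType).
Local Notation d := n.+2.
Variable C : 'I_d -> 'I_d -> 'I_d -> 'I_d -> R.
Hypotheses (weylC : is_weyl C) (invC : spin_invariant C).

Lemma C_skewl a b c e : C a b c e = - C b a c e. Proof. by case: weylC. Qed.
Lemma C_skewr a b c e : C a b c e = - C a b e c. Proof. by case: weylC. Qed.
Lemma C_pairC a b c e : C a b c e = C c e a b. Proof. by case: weylC. Qed.
Lemma C_bianchi a b c e : C a b c e + C a c e b + C a e b c = 0.
Proof. by case: weylC. Qed.

Lemma C_diagl a c e : C a a c e = 0.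
Proof. by have := C_skewl a a c e; lra. Qed.
Lemma C_diagr a b c : C a b c c = 0.
Proof. by have := C_skewr a b c c; lra. Qed.

Lemma C_trace a c :
  C a idx_l c idx_n + C a idx_n c idx_l + \sum_i C a (idx_m i) c (idx_m i) = 0.
Proof.
case: weylC => _ _ _ _ /(_ a c) trC; rewrite -[RHS]trC.
under [RHS]eq_bigr => b _ do rewrite sum_fg_mul.
rewrite big_frame /= swap_ln_l swap_ln_n.
by congr (_ + _); apply: eq_bigr => i _; rewrite swap_ln_m.
Qed.

Definition quarter_turn (k m : 'I_n) : 'M[R]_d :=
  signed_perm_mx (tperm (idx_m k) (idx_m m)) (fun a => if a == idx_m m then -1 else 1).

Lemma quarter_turn_spin_rot k m : k != m -> spin_rot (quarter_turn k m).
Proof.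
move=> km; apply: signed_perm_spin_rot => //.
- by rewrite tpermD.
- by rewrite tpermD.
- by move=> a; case: (a == idx_m m); rewrite ?mulrNN mulr1.
- rewrite odd_tperm eq_idx_m km expr1 (bigD1 (idx_m m)) //= eqxx.
  by rewrite big1 => [|a /negbTE ->]; rewrite ?mulr1 ?mulrNN ?mulr1.
Qed.

Lemma C_quarter_turn k m : k != m -> forall a b c e,
  let t := tperm (idx_m k) (idx_m m) in
  let sg x : R := if x == idx_m m then -1 else 1 in
  C a b c e = sg a * sg b * sg c * sg e * C (t a) (t b) (t c) (t e).
Proof. by move=> km; apply: spin_invariant_signed_perm (quarter_turn_spin_rot km). Qed.

Lemma C_half_turn_odd (k m : 'I_n) a b c e : k != m ->
  odd (count [pred x | (x == idx_m k) || (x == idx_m m)] [:: a; b; c; e]) ->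
  C a b c e = 0.
Proof.
move=> km oddC.
pose sg x : R := (-1) ^+ ((x == idx_m k) || (x == idx_m m)).
have rotL : spin_rot (signed_perm_mx 1 sg).
  apply: signed_perm_spin_rot; rewrite ?perm1 //.
  - by move=> x; rewrite /sg -signr_addb addbb.
  - rewrite odd_perm1 mul1r (bigD1 (idx_m k)) // (bigD1 (idx_m m)) /=; last first.
      by rewrite eq_idx_m eq_sym km.
    rewrite big1 => [|x /andP[xm xk]]; last by rewrite /sg (negbTE xm) (negbTE xk).
    by rewrite /sg !eqxx orbT /= expr1 mulr1 mulrNN mulr1.
have := spin_invariant_signed_perm invC rotL a b c e.
rewrite !perm1 /sg -!exprD -signr_odd; move: oddC => /=.
by rewrite !addnA addn0 => -> /=; lra.
Qed.

Lemma null_neq_m (t : 'I_d) i : (t < 2)%N -> t != idx_m i.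
Proof. by move=> t2; apply: contraTneq t2 => ->. Qed.

Lemma tperm_m_null (i j : 'I_n) (t : 'I_d) : (t < 2)%N -> tperm (idx_m i) (idx_m j) t = t.
Proof. by move=> t2; rewrite tpermD // eq_sym null_neq_m. Qed.

Lemma C_null_spatial_rot (t t' : 'I_d) (i j : 'I_n) : (t < 2)%N -> (t' < 2)%N ->
  C t (idx_m i) t' (idx_m i) = C t (idx_m j) t' (idx_m j).
Proof.
move=> t2 t'2; have [-> // | ij] := eqVneq i j.
rewrite (C_quarter_turn ij) /= !(tperm_m_null _ _ t2, tperm_m_null _ _ t'2) tpermL.
rewrite eq_idx_m (negbTE ij).
by rewrite !(negbTE (null_neq_m _ _)) // !mul1r.
Qed.

Lemma C_null_spatial_skew (t t' : 'I_d) (i j : 'I_n) : (t < 2)%N -> (t' < 2)%N ->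
  i != j -> C t (idx_m i) t' (idx_m j) = - C t (idx_m j) t' (idx_m i).
Proof.
move=> t2 t'2 ij; rewrite (C_quarter_turn ij) /= tpermL tpermR.
rewrite !(tperm_m_null _ _ t2, tperm_m_null _ _ t'2).
rewrite eq_idx_m (negbTE ij) eqxx !(negbTE (null_neq_m _ _)) //.
by rewrite !mul1r mulN1r.
Qed.

Lemma C_spatial_pair_rot (i j k : 'I_n) : i != j -> i != k ->
  C (idx_m i) (idx_m j) (idx_m i) (idx_m j) = C (idx_m i) (idx_m k) (idx_m i) (idx_m k).
Proof.
move=> ij ik; have [-> // | jk] := eqVneq j k.
have i_fix : tperm (idx_m j) (idx_m k) (idx_m i) = idx_m i.
  by rewrite tpermD // eq_idx_m eq_sym.
rewrite (C_quarter_turn jk) /= tpermL i_fix !eq_idx_m.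
by rewrite (negbTE ik) (negbTE jk) !mul1r.
Qed.

Lemma C_three_distinct (x : 'I_d) (i j k : 'I_n) :
  x != idx_m i -> x != idx_m j -> x != idx_m k -> i != j -> i != k -> j != k ->
  C x (idx_m i) (idx_m j) (idx_m k) = 0.
Proof.
(* Quarter turns in the (i, j) and (i, k) planes give C x i j k = C x j k i = C x k i j,
   so the Bianchi identity reads 3 * C x i j k = 0. *)
move=> xi xj xk ij ik jk; have kj : k != j by rewrite eq_sym.
have fix_x l m : x != idx_m l -> x != idx_m m -> tperm (idx_m l) (idx_m m) x = x.
  by move=> xl xm; rewrite tpermD // eq_sym.
have fix_m l l' m : l != m -> l' != m -> tperm (idx_m l) (idx_m l') (idx_m m) = idx_m m.
  by move=> lm l'm; rewrite tpermD // eq_idx_m.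
have turn_ij := C_quarter_turn ij x (idx_m i) (idx_m j) (idx_m k).
have turn_ik := C_quarter_turn ik x (idx_m i) (idx_m j) (idx_m k).
move: turn_ij turn_ik => /=; rewrite !fix_x // !tpermL !tpermR !fix_m //.
rewrite !eq_idx_m !eqxx (negbTE xj) (negbTE xk) (negbTE ij) (negbTE ik) (negbTE jk).
rewrite eq_sym (negbTE jk) => turn_ij turn_ik.
have := C_bianchi x (idx_m i) (idx_m j) (idx_m k).
rewrite (C_skewr x (idx_m j)) (C_skewr x (idx_m k)); lra.
Qed.

Lemma C_null_spatial_zero (t : 'I_d) (i j : 'I_n) : (t < 2)%N ->
  C t (idx_m i) t (idx_m j) = 0.
Proof.
move=> t2; have [<- | ij] := eqVneq i j; last first.
  by have := C_null_spatial_skew t2 t2 ij; rewrite [C t (idx_m j) _ _]C_pairC; lra.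
have := C_trace t t.
have -> : C t idx_l t idx_n + C t idx_n t idx_l = 0.
  by case: (frameP t) t2 => // _; rewrite !(C_diagl, C_diagr) addr0.
under eq_bigr => k _ do rewrite (C_null_spatial_rot _ i t2 t2).
have n_gt0 : (0 < n)%N by apply: leq_ltn_trans (ltn_ord i).
by rewrite sumr_const card_ord add0r => /eqP; rewrite mulrn_eq0 gtn_eqF //= => /eqP.
Qed.

Lemma C_spatial_pair_const (i j k l : 'I_n) : i != j -> k != l ->
  C (idx_m i) (idx_m j) (idx_m i) (idx_m j) = C (idx_m k) (idx_m l) (idx_m k) (idx_m l).
Proof.
have pairC a b : C a b a b = C b a b a by rewrite C_skewl C_skewr opprK.
move=> ij kl; have [li | il] := eqVneq i l.
  have ik : i != k by rewrite li eq_sym.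
  by rewrite (C_spatial_pair_rot ij ik) pairC li.
have li : l != i by rewrite eq_sym.
have lk : l != k by rewrite eq_sym.
by rewrite (C_spatial_pair_rot ij il) pairC (C_spatial_pair_rot li lk) pairC.
Qed.

Lemma sum_spatial_pair (i j k : 'I_n) : i != j ->
  \sum_l C (idx_m k) (idx_m l) (idx_m k) (idx_m l)
  = n.-1%:R * C (idx_m i) (idx_m j) (idx_m i) (idx_m j).
Proof.
move=> ij; rewrite (bigD1 k) //= C_diagl add0r.
rewrite (eq_bigr (fun=> C (idx_m i) (idx_m j) (idx_m i) (idx_m j))) => [|l lk].
  by rewrite sumr_const cardC1 card_ord mulr_natl.
by apply: C_spatial_pair_const; rewrite // eq_sym.
Qed.

Lemma Rbar_spatial_pair (i j : 'I_n) : i != j ->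
  Rbar C = (n * n.-1)%:R * C (idx_m i) (idx_m j) (idx_m i) (idx_m j).
Proof.
move=> ij; rewrite /Rbar big_spatial.
transitivity (\sum_(k < n) n.-1%:R * C (idx_m i) (idx_m j) (idx_m i) (idx_m j)).
  apply: eq_bigr => k _; rewrite /Rbar_ij big_spatial -(sum_spatial_pair k ij).
  by apply: eq_bigr => l _; rewrite C_skewl C_skewr opprK.
by rewrite sumr_const card_ord -(mulr_natl (_ * _) n) mulrA -natrM.
Qed.

Lemma C_null_spatial_trace (i j k : 'I_n) : i != j ->
  2 * C idx_l (idx_m k) idx_n (idx_m k)
  = - (n.-1%:R * C (idx_m i) (idx_m j) (idx_m i) (idx_m j)).
Proof.
move=> ij; have := C_trace (idx_m k) (idx_m k).
rewrite (sum_spatial_pair k ij) [C _ idx_n _ idx_l]C_pairC C_skewl C_skewr opprK.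
lra.
Qed.

Lemma C_ln_trace (k : 'I_n) :
  C idx_l idx_n idx_l idx_n = n%:R * C idx_l (idx_m k) idx_n (idx_m k).
Proof.
have := C_trace idx_l idx_n; rewrite C_diagl add0r [C _ _ idx_n idx_l]C_skewr.
under eq_bigr => l _ do rewrite (C_null_spatial_rot _ k (isT : idx_l < 2)%N (isT : idx_n < 2)%N).
rewrite sumr_const card_ord -mulr_natl; lra.
Qed.

Lemma C_spatial_pair_Rbar (i j : 'I_n) : i != j ->
  C (idx_m i) (idx_m j) (idx_m i) (idx_m j) = Rbar C / (n * n.-1)%:R.
Proof.
move=> ij; have n_gt1 := ord_neq_gt1 ij.
rewrite (Rbar_spatial_pair ij) [_%:R * _]mulrC mulfK // pnatr_eq0 muln_eq0.
by apply/norP; split; lia.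
Qed.

Lemma C_null_spatial_Rbar (k : 'I_n) : (1 < n)%N ->
  C idx_l (idx_m k) idx_n (idx_m k) = - Rbar C / (2 * n%:R).
Proof.
move=> n_gt1; pose i : 'I_n := Ordinal (ltnW n_gt1); pose j : 'I_n := Ordinal n_gt1.
have ij : i != j by [].
have := C_null_spatial_trace k ij; rewrite (Rbar_spatial_pair ij) natrM.
have n0 : n%:R != 0 :> R by rewrite pnatr_eq0 -lt0n ltnW.
set b := C idx_l _ _ _; set g := C (idx_m i) _ _ _ => trace_b.
have -> : b = - (n.-1%:R * g) / 2 by rewrite -trace_b; field.
by field.
Qed.

Lemma C_ln_Rbar : (1 < n)%N -> C idx_l idx_n idx_l idx_n = - (Rbar C / 2).
Proof.
move=> n_gt1; have n0 : n%:R != 0 :> R by rewrite pnatr_eq0 -lt0n ltnW.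
by rewrite (C_ln_trace (Ordinal (ltnW n_gt1))) C_null_spatial_Rbar //; field.
Qed.

Lemma weyl_entry_swap (p q : biv d) :
  weyl_entry C p q = C (swap_ln (val p).1) (swap_ln (val p).2) (val q).1 (val q).2.
Proof. by rewrite /weyl_entry !Craise_swap [C _ _ (val q).2 _]C_skewr; field. Qed.

Lemma C_null_three_spatial (t : 'I_d) (i k l : 'I_n) : (t < 2)%N -> k != l ->
  C t (idx_m i) (idx_m k) (idx_m l) = 0.
Proof.
move=> t2 kl; have [ikl | ikl] := boolP ((i == k) || (i == l)).
  by apply: (C_half_turn_odd (k := k) (m := l)); count_lia.
by apply: C_three_distinct; count_lia.
Qed.

Lemma C_spatial_offdiag (i j k l : 'I_n) : (i < j)%N -> (k < l)%N -> (i, j) != (k, l) ->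
  C (idx_m i) (idx_m j) (idx_m k) (idx_m l) = 0.
Proof.
rewrite xpair_eqE => ij kl ne.
have [shared | disjoint] := boolP [|| i == k, i == l, j == k | j == l].
  by apply: (C_half_turn_odd (k := i) (m := j)); count_lia.
by apply: C_three_distinct; count_lia.
Qed.

Lemma C_ln_spatial_pair (i j : 'I_n) : i != j ->
  C idx_l idx_n (idx_m i) (idx_m j) = 2 * C idx_l (idx_m i) idx_n (idx_m j).
Proof.
move=> ij; have := C_bianchi idx_l idx_n (idx_m i) (idx_m j).
have ji : j != i by rewrite eq_sym.
by rewrite [C _ (idx_m i) _ _]C_skewr (@C_null_spatial_skew idx_l idx_n j i isT isT ji); lra.
Qed.

End WeylSymmetries.

Lemma exists_fresh n (i j : 'I_n) : (2 < n)%N -> exists2 y : 'I_n, y != i & y != j.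
Proof.
move=> n_gt2.
(* the least of 0, 1, 2 that is neither i nor j *)
pose y := (if i + j == 1 then 2 else if (i == 0 :> nat) || (j == 0 :> nat) then 1 else 0)%N.
have lt_y : (y < n)%N by rewrite /y; repeat case: ifP => ?; lia.
by exists (Ordinal lt_y); rewrite -val_eqE /= /y; repeat case: ifP => ?; lia.
Qed.

Lemma prod_ord_lt_const (T : pzSemiRingType) m (c : T) :
  \prod_(i < m) \prod_(j < m | (i < j)%N) c = c ^+ 'C(m, 2).
Proof.
elim: m => [|m IH]; first by rewrite big_ord0.
rewrite big_ord_recl binS bin1 addnC exprD; congr (_ * _).
  by rewrite big_mkcond big_ord_recl /= mul1r prodr_const card_ord.
rewrite -IH; apply: eq_bigr => i _.
by rewrite big_mkcond big_ord_recl /= mul1r [RHS]big_mkcond.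
Qed.

Section HigherDimension.
Variables (n : nat) (R : rcfType).
Local Notation d := n.+2.
Variable C : 'I_d -> 'I_d -> 'I_d -> 'I_d -> R.
Hypotheses (weylC : is_weyl C) (invC : spin_invariant C) (n_gt2 : (2 < n)%N).

Ltac half_turn k m := by apply: (C_half_turn_odd invC (k := k) (m := m)); count_lia.

Lemma weyl_entry_offdiag (p q : biv d) : p != q -> weyl_entry C p q = 0.
Proof.
rewrite weyl_entry_swap //; case: p q => [[a b] /= ab] [[c e] /= ce].
rewrite -val_eqE /= xpair_eqE.
case: (bivP ab) => [|i|i|i j ij]; case: (bivP ce) => [|k|k|k l kl] pq;
  rewrite ?swap_ln_l ?swap_ln_n ?swap_ln_m.
- by rewrite !eqxx in pq.
- by have [y yk _] := exists_fresh k k n_gt2; half_turn k y.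
- by have [y yk _] := exists_fresh k k n_gt2; half_turn k y.
- by have [y yk yl] := exists_fresh k l n_gt2; half_turn k y.
- by have [y yi _] := exists_fresh i i n_gt2; half_turn i y.
- by have [y yi yk] := exists_fresh i k n_gt2; half_turn i y.
- exact: C_null_spatial_zero.
- by apply: C_null_three_spatial; rewrite // neq_ltn kl.
- by have [y yi _] := exists_fresh i i n_gt2; half_turn i y.
- exact: C_null_spatial_zero.
- by have [y yi yk] := exists_fresh i k n_gt2; half_turn i y.
- by apply: C_null_three_spatial; rewrite // neq_ltn kl.
- by have [y yi yj] := exists_fresh i j n_gt2; half_turn i y.
- by rewrite C_pairC //; apply: C_null_three_spatial; rewrite // neq_ltn ij.
- by rewrite C_pairC //; apply: C_null_three_spatial; rewrite // neq_ltn ij.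
- by apply: C_spatial_offdiag; rewrite // xpair_eqE.
Qed.

Lemma weyl_op_trig : is_trig_mx (weyl_op C).
Proof.
apply/is_trig_mxP => i j lt_ij; rewrite mxE weyl_entry_offdiag //.
by rewrite (inj_eq enum_val_inj) -val_eqE neq_ltn lt_ij.
Qed.

Lemma char_poly_weyl_op_diag :
  char_poly (weyl_op C) = \prod_(p : biv d) ('X - (weyl_entry C p p)%:P).
Proof.
rewrite char_poly_trig ?weyl_op_trig // (big_enum_val (A := {: biv d})) /=.
by apply: eq_bigr => i _; rewrite mxE.
Qed.

Lemma char_poly_weyl_op_higher :
  char_poly (weyl_op C) =
  ('X - (- Rbar C / (2 * n%:R))%:P) ^+ (2 * n) * ('X - (Rbar C / 2)%:P)
  * ('X - (Rbar C / (n * n.-1)%:R)%:P) ^+ 'C(n, 2).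
Proof.
have n_gt1 : (1 < n)%N by apply: ltnW.
rewrite char_poly_weyl_op_diag.
under eq_bigr => p _ do rewrite weyl_entry_swap //.
rewrite (big_biv _ (fun a b => 'X - (C (swap_ln a) (swap_ln b) a b)%:P)) /=.
rewrite swap_ln_l swap_ln_n C_skewl // C_ln_Rbar // opprK.
under eq_bigr => i _ do rewrite swap_ln_m C_pairC // C_null_spatial_Rbar //.
under [X in _ * X]eq_bigr => i _ do under eq_bigr => j lt_ij do
  rewrite !swap_ln_m (C_spatial_pair_Rbar weylC invC (negbT (ltn_eqF lt_ij))).
by rewrite prod_ord_lt_const prodr_const card_ord -expr2 -exprM mulnC; ring.
Qed.

End HigherDimension.

Section CharPoly.
Variable T : comNzRingType.

Lemma char_poly_reindex m n (e : m = n) (A : 'M[T]_n) (h : 'I_m -> 'I_n) :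
  injective h -> char_poly (\matrix_(i, j) A (h i) (h j)) = char_poly A.
Proof.
case: n / e A h => A h inj_h; pose s : 'S_m := perm inj_h.
have -> : \matrix_(i, j) A (h i) (h j) = row_perm s (col_perm s A).
  by apply/matrixP => i j; rewrite !mxE !permE.
rewrite /char_poly.
have -> : char_poly_mx (row_perm s (col_perm s A)) = row_perm s (col_perm s (char_poly_mx A)).
  by apply/matrixP => i j; rewrite !mxE (inj_eq perm_inj).
rewrite row_permE col_permE !det_mulmx !det_perm odd_permV.
by rewrite mulrC -mulrA -expr2 sqrr_sign mulr1.
Qed.

Lemma char_poly_block_diag m1 m2 (A : 'M[T]_(m1 + m2)) :
  ursubmx A = 0 -> dlsubmx A = 0 ->
  char_poly A = char_poly (ulsubmx A) * char_poly (drsubmx A).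
Proof.
move=> ur0 dl0; rewrite -[A in LHS]submxK ur0 dl0.
by rewrite /char_poly char_block_diag_mx det_ublock.
Qed.

Lemma char_poly2 (A : 'M[T]_2) :
  char_poly A = ('X - (A 0 0)%:P) * ('X - (A 1 1)%:P) - (A 0 1 * A 1 0)%:P.
Proof.
have lift1 (i : 'I_2) (j : 'I_1) : i = 0 -> lift i j = 1.
  by move=> ->; rewrite ord1; apply: val_inj.
rewrite /char_poly (expand_det_row _ 0) !big_ord_recl big_ord0 /cofactor !det_mx11 !mxE /=.
rewrite (_ : lift (lift ord0 ord0) _ = 0); last by rewrite ord1; apply: val_inj.
rewrite !lift1 // (_ : ord0 = 0) // polyCM !mulr1n !mulr0n expr0 !add0r mul1r expr1; ring.
Qed.
End CharPoly.

Local Open Scope complex_scope.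

Lemma map_char_poly_rotation2 (R : rcfType) (M : 'M[R]_2) (a b : R) :
  M 0 0 = a -> M 1 1 = a -> M 0 1 = - b -> M 1 0 = b ->
  map_poly (real_complex R) (char_poly M) =
  ('X - (a%:C + 'i * b%:C)%:P) * ('X - (a%:C - 'i * b%:C)%:P).
Proof.
move=> M00 M11 M01 M10.
rewrite map_char_poly char_poly2 !mxE M00 M11 M01 M10 rmorphN.
have -> : ('X - (a%:C + 'i * b%:C)%:P) * ('X - (a%:C - 'i * b%:C)%:P) =
          ('X - a%:C%:P) * ('X - a%:C%:P) - ('i ^+ 2)%:P * (b%:C%:P * b%:C%:P) :> {poly R[i]}.
  by rewrite !polyCB !polyCD !polyCM; ring.
by rewrite sqr_i !polyCM !polyCN polyC1; ring.
Qed.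

Local Close Scope complex_scope.

Definition biv4_pair (a b : 'I_4) (lt_ab : (a < b)%N) : biv 4 := exist _ (a, b) lt_ab.

(* Ordering (ln, m3m4 | lm3, lm4 | nm3, nm4), in which the Weyl operator is block diagonal. *)
Definition biv4_block (i : 'I_(2 + (2 + 2))) : biv 4 :=
  match val i with
  | 0 => @biv4_pair idx_l idx_n isT
  | 1 => @biv4_pair (idx_m ord0) (idx_m ord_max) isT
  | 2 => @biv4_pair idx_l (idx_m ord0) isT
  | 3 => @biv4_pair idx_l (idx_m ord_max) isT
  | 4 => @biv4_pair idx_n (idx_m ord0) isT
  | _ => @biv4_pair idx_n (idx_m ord_max) isT
  end.

Definition biv4_unblock (p : biv 4) : 'I_(2 + (2 + 2)) :=
  match val (val p).1, val (val p).2 with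
  | 0, 1 => @Ordinal (2 + (2 + 2)) 0 isT
  | 0, 2 => @Ordinal (2 + (2 + 2)) 2 isT
  | 0, 3 => @Ordinal (2 + (2 + 2)) 3 isT
  | 1, 2 => @Ordinal (2 + (2 + 2)) 4 isT
  | 1, 3 => @Ordinal (2 + (2 + 2)) 5 isT
  | _, _ => @Ordinal (2 + (2 + 2)) 1 isT
  end.

Lemma biv4_blockK : cancel biv4_block biv4_unblock.
Proof. by case=> [[|[|[|[|[|[|i]]]]]] lt_i] //; apply: val_inj. Qed.

Lemma biv4_unblockK : cancel biv4_unblock biv4_block.
Proof.
case=> [[[[|[|[|[|a]]]] lt_a] [[|[|[|[|b]]]] lt_b]] lt_ab] //; apply: val_inj => /=.
all: by congr pair; apply: val_inj.
Qed.

Section Dimension4.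
Variables (R : rcfType) (C : 'I_4 -> 'I_4 -> 'I_4 -> 'I_4 -> R).
Hypotheses (weylC : is_weyl C) (invC : spin_invariant C).

Definition weyl_block_mx : 'M[R]_(2 + (2 + 2)) :=
  \matrix_(i, j) weyl_entry C (biv4_block i) (biv4_block j).

Lemma char_poly_weyl_block : char_poly (weyl_op C) = char_poly weyl_block_mx.
Proof.
have bij_block := Bijective biv4_blockK biv4_unblockK.
have card_biv4 : (2 + (2 + 2) = #|{: biv 4}|)%N by rewrite -(bij_eq_card bij_block) card_ord.
rewrite -(@char_poly_reindex _ _ _ card_biv4 _ (fun i => enum_rank (biv4_block i))).
  by congr char_poly; apply/matrixP => i j; rewrite !mxE !enum_rankK.
by move=> i j /enum_rank_inj /(bij_inj bij_block).
Qed.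

Lemma weyl_block_offdiag (i j : 'I_(2 + (2 + 2))) : (i./2 != j./2)%N ->
  weyl_entry C (biv4_block i) (biv4_block j) = 0.
Proof.
rewrite weyl_entry_swap //.
case: i j => [[|[|[|[|[|[|?]]]]]] ?] [[|[|[|[|[|[|?]]]]]] ?] //= _;
  rewrite ?swap_ln_l ?swap_ln_n ?swap_ln_m.
all: first [ by apply: (C_half_turn_odd invC (k := ord0) (m := ord_max)); count_lia
           | by apply: C_null_spatial_zero ].
Qed.

Lemma char_poly_weyl_block_split :
  char_poly weyl_block_mx =
  char_poly (ulsubmx weyl_block_mx) *
  (char_poly (ulsubmx (drsubmx weyl_block_mx)) * char_poly (drsubmx (drsubmx weyl_block_mx))).
Proof.
rewrite (char_poly_block_diag (A := weyl_block_mx)) ?(char_poly_block_diag (A := drsubmx _)) //.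
all: apply/matrixP => i j; rewrite !mxE weyl_block_offdiag //=.
all: by move: (ltn_ord i) (ltn_ord j); lia.
Qed.

Local Open Scope complex_scope.

Lemma char_poly_weyl_op_dim4 :
  let Rb := (Rbar C)%:C in
  let A := (C idx_l idx_n (idx_m ord0) (idx_m ord_max))%:C in
  char_poly (map_mx (real_complex R) (weyl_op C))
  = ('X - (- (Rb + 2 * 'i * A) / 4)%:P) ^+ 2 * ('X - (- (Rb - 2 * 'i * A) / 4)%:P) ^+ 2
    * ('X - ((Rb + 2 * 'i * A) / 2)%:P) * ('X - ((Rb - 2 * 'i * A) / 2)%:P).
Proof.
move=> Rb A.
set be := C idx_l (idx_m ord0) idx_n (idx_m ord0).
set ka := C idx_l (idx_m ord0) idx_n (idx_m ord_max).
have be_m1 : C idx_l (idx_m ord_max) idx_n (idx_m ord_max) = be by apply: C_null_spatial_rot.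
have ka_skew : C idx_l (idx_m ord_max) idx_n (idx_m ord0) = - ka by apply: C_null_spatial_skew.
rewrite -map_char_poly char_poly_weyl_block char_poly_weyl_block_split.
rewrite !(rmorphM _ (char_poly _)) /=.
rewrite (map_char_poly_rotation2 (a := Rbar C / 2) (b := C idx_l idx_n (idx_m ord0) (idx_m ord_max)));
  rewrite ?mxE ?weyl_entry_swap //= ?swap_ln_l ?swap_ln_n ?swap_ln_m; last first.
- exact: C_pairC.
- exact: C_skewl.
- by rewrite C_spatial_pair_Rbar.
- by rewrite C_skewl // C_ln_Rbar // opprK.
rewrite (map_char_poly_rotation2 (a := be) (b := ka));
  rewrite ?mxE ?weyl_entry_swap //= ?swap_ln_l ?swap_ln_n ?swap_ln_m; last first.
- exact: C_pairC.
- by rewrite C_pairC // ka_skew.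
- by rewrite C_pairC.
- by rewrite C_pairC.
rewrite (map_char_poly_rotation2 (a := be) (b := - ka));
  rewrite ?mxE ?weyl_entry_swap //= ?swap_ln_l ?swap_ln_n ?swap_ln_m ?opprK //.
have e_half : (Rbar C / 2)%:C = Rb / 2 by rewrite rmorphM fmorphV rmorph_nat.
have e_be : be%:C = - Rb / 4.
  by rewrite /be C_null_spatial_Rbar // rmorphM rmorphN fmorphV rmorphM !rmorph_nat; field.
have e_ka : ka%:C = A / 2.
  by rewrite /A (C_ln_spatial_pair weylC invC (_ : ord0 != ord_max)) // rmorphM rmorph_nat; field.
rewrite e_half e_be rmorphN /= e_ka -/A.
have -> : Rb / 2 + 'i * A = (Rb + 2 * 'i * A) / 2 by field.
have -> : Rb / 2 - 'i * A = (Rb - 2 * 'i * A) / 2 by field.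
have -> : - Rb / 4 + 'i * (A / 2) = - (Rb - 2 * 'i * A) / 4 by field.
have -> : - Rb / 4 - 'i * (A / 2) = - (Rb + 2 * 'i * A) / 4 by field.
have -> : - Rb / 4 + 'i * - (A / 2) = - (Rb + 2 * 'i * A) / 4 by field.
have -> : - Rb / 4 - 'i * - (A / 2) = - (Rb - 2 * 'i * A) / 4 by field.
ring.
Qed.

End Dimension4.

Theorem mainTheorem2 (R : rcfType) :
  (* A_34 = C_{0134} is C 0 1 2 3 in our indexing *)
  (forall C : 'I_4 -> 'I_4 -> 'I_4 -> 'I_4 -> R,
     is_weyl C -> spin_invariant C ->
     let Rb := (Rbar C)%:C%C in
     let A := (C ord0 (inord 1) (inord 2) (inord 3))%:C%C in
     let I := 'i%C in
     char_poly (map_mx (fun x => x%:C%C) (weyl_op C))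
     = ('X - (- (Rb + 2 * I * A) / 4)%:P) ^+ 2
       * ('X - (- (Rb - 2 * I * A) / 4)%:P) ^+ 2
       * ('X - ((Rb + 2 * I * A) / 2)%:P)
       * ('X - ((Rb - 2 * I * A) / 2)%:P)) /\
  (forall (d : nat) (C : 'I_d -> 'I_d -> 'I_d -> 'I_d -> R),
     (4 < d)%N -> is_weyl C -> spin_invariant C ->
     char_poly (weyl_op C)
     = ('X - (- Rbar C / (2 * (d - 2)%:R))%:P) ^+ (2 * (d - 2))
       * ('X - (Rbar C / 2)%:P)
       * ('X - (Rbar C / ((d - 2) * (d - 3))%:R)%:P) ^+ ((d - 2) * (d - 3) %/ 2)).
Proof.
split.
- move=> C weylC invC.
  have -> : inord 1 = idx_n :> 'I_4 by apply: val_inj; rewrite /= inordK.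
  have -> : inord 2 = idx_m ord0 :> 'I_4 by apply: val_inj; rewrite /= inordK.
  have -> : inord 3 = idx_m ord_max :> 'I_4 by apply: val_inj; rewrite /= inordK.
  exact: char_poly_weyl_op_dim4.
- move=> [|[|n]] C // d_gt4 weylC invC.
  rewrite !subSS subn0 subn1 divn2 -bin2.
  by apply: char_poly_weyl_op_higher.
Qed.
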